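(* Let $(E,d)$ be a metric space with a Borel probability measure $\mu$, let $k\geq1$ and $\alpha_k:[0,\infty)\to[0,\infty)$, and assume $(E,d,\mu)$ satisfies the multi-set concentration of measure property of order $k$ with concentration profile $\alpha_k$. Let $f:E\to\mathbb{R}$ be $1$-Lipschitz, and let $A_1,\ldots,A_k$ be Borel subsets of $E$ with $(\mu(A_1),\ldots,\mu(A_k))\in\Delta_k$; set $A=A_1\cup\cdots\cup A_k$. Then for any $1$-Lipschitz function $g:E\to\mathbb{R}$ with $g=f$ on $A$, \[ \mu(|f-g|\geq r)\leq(1-\mu(A))\,\alpha_k(r/2),\qquad\forall\,0<r\leq\min_{i\neq j}d(A_i,A_j). \]
   Context: For $A,B\subset E$, $d(A,B)=\inf\{d(x,y):x\in A,y\in B\}$ and for $r>0$, $A_r=\{x\in E:\exists y\in A,\ d(x,y)<r\}$. $\Delta_k$ is the set of $(a_1,\ldots,a_k)\in[0,1]^k$ with $\sum_ja_j\leq1$ and $a_i+\sum_ja_j\geq1$ for every $i$. $(E,d,\mu)$ satisfies the multi-set concentration of measure property of order $k$ with profile $\alpha_k$ if for all Borel sets $A_1,\ldots,A_k\subset E$ with $(\mu(A_1),\ldots,\mu(A_k))\in\Delta_k$, the set $A=A_1\cup\cdots\cup A_k$ satisfies $\mu(A_r)\geq1-(1-\mu(A))\alpha_k(r)$ for all $0<r\leq\frac12\min_{i\neq j}d(A_i,A_j)$. *)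

From HB Require Import structures.
From mathcomp Require Import all_boot all_order all_algebra.
From mathcomp Require Import all_classical all_reals all_analysis.
Set Implicit Arguments. Unset Strict Implicit. Unset Printing Implicit Defensive.
Import Order.TTheory GRing.Theory Num.Theory.
Local Open Scope classical_set_scope.
Local Open Scope ring_scope.

Section MetricDefs.
Context {R : realType} {E : Type}.

Definition is_metric (dist : E -> E -> R) : Prop :=
  [/\ forall x y, dist x y = 0 <-> x = y,
      forall x y, dist x y = dist y x &
      forall x y z, dist x z <= dist x y + dist y z].

Definition dopen (dist : E -> E -> R) (U : set E) : Prop :=
  forall x, U x -> exists2 e : R, 0 < e & forall y, dist x y < e -> U y.

(* d(A,B) = inf { d(x,y) : x in A, y in B }, an extended real (+oo if A or B empty) *)
Definition setdist (dist : E -> E -> R) (A B : set E) : \bar R :=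
  ereal_inf [set (dist xy.1 xy.2)%:E | xy in A `*` B].

Definition enlarge (dist : E -> E -> R) (A : set E) (r : R) : set E :=
  [set x | exists2 y, A y & dist x y < r].

Definition lipschitz1 (dist : E -> E -> R) (f : E -> R) : Prop :=
  forall x y, `|f x - f y| <= dist x y.

End MetricDefs.

Definition inDelta {R : realType} (k : nat) (a : 'I_k -> \bar R) : Prop :=
  [/\ forall i, (0 <= a i /\ a i <= 1)%E,
      (\sum_(j < k) a j <= 1)%E &
      forall i, (1 <= a i + \sum_(j < k) a j)%E].

Definition multiset_concentration {d : measure_display} {E : measurableType d}
  {R : realType} (dist : E -> E -> R) (mu : probability E R) (k : nat)
  (alpha : R -> R) : Prop :=
  forall A : 'I_k -> set E,
    (forall i, measurable (A i)) ->
    inDelta (fun i => mu (A i)) ->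
    let U := \bigcup_(i in [set: 'I_k]) A i in
    forall r : R, 0 < r ->
      (forall i j, i != j -> (r%:E <= (2^-1)%:E * setdist dist (A i) (A j))%E) ->
      (1 - (1 - mu U) * (alpha r)%:E <= mu (enlarge dist U r))%E.

From HB Require Import structures.
From mathcomp Require Import all_boot all_order all_algebra.
From mathcomp Require Import all_classical all_reals all_analysis.
From mathcomp Require Import lra ring.
Set Implicit Arguments. Unset Strict Implicit. Unset Printing Implicit Defensive.
Import Order.TTheory GRing.Theory Num.Theory.
Local Open Scope classical_set_scope.
Local Open Scope ring_scope.

(* f - g is 2-Lipschitz and vanishes on A, so |f - g| < r on the enlargement
   A_{r/2}; hence {|f - g| >= r} lies in the complement of A_{r/2}.  Since
   r/2 <= d(A_i, A_j)/2, the concentration property bounds the measure of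
   that complement by (1 - mu(A)) alpha(r/2). *)

Section LipschitzEnlargement.
Context {R : realType} {E : Type} {dist : E -> E -> R}.
Hypothesis dist_sym : forall x y, dist x y = dist y x.
Hypothesis dist_triangle : forall x y z, dist x z <= dist x y + dist y z.

Lemma dopen_enlarge (A : set E) (r : R) : dopen dist (enlarge dist A r).
Proof.
move=> x [y Ay dxy]; exists (r - dist x y); first by rewrite subr_gt0.
move=> z dxz; exists y => //.
have := dist_triangle z x y; rewrite (dist_sym z x).
by move/le_lt_trans; apply; rewrite -ltrBrDr.
Qed.

Lemma lipschitz1_sub (f g : E -> R) :
  lipschitz1 dist f -> lipschitz1 dist g ->
  forall x y, `|(f \- g) x - (f \- g) y| <= 2 * dist x y.
Proof.
move=> Lf Lg x y /=.
rewrite (_ : _ - _ = (f x - f y) - (g x - g y)); last by ring.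
by rewrite mulr2n mulrDl mul1r; apply: le_trans (ler_normB _ _) (lerD _ _).
Qed.

Lemma dopen_norm_lt (h : E -> R) (c r : R) : 0 < c ->
  (forall x y, `|h x - h y| <= c * dist x y) ->
  dopen dist [set x | `|h x| < r].
Proof.
move=> c0 Lh x /= hx; exists ((r - `|h x|) / c); first by rewrite divr_gt0 // subr_gt0.
move=> y dxy.
have cdxy : c * dist x y < r - `|h x| by rewrite mulrC -ltr_pdivlMr.
have : `|h y| <= `|h x| + `|h x - h y|.
  by rewrite {1}(_ : h y = h x - (h x - h y)); [exact: ler_normB | ring].
have := Lh x y; lra.
Qed.

Lemma norm_lt_on_enlarge (h : E -> R) (c s : R) (A : set E) : 0 < c ->
  (forall x y, `|h x - h y| <= c * dist x y) ->
  (forall y, A y -> h y = 0) ->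
  forall x, enlarge dist A s x -> `|h x| < c * s.
Proof.
move=> c0 Lh hA x [y Ay dxy].
by have := Lh x y; rewrite (hA y Ay) subr0 => /le_lt_trans; apply; rewrite ltr_pM2l.
Qed.

End LipschitzEnlargement.

Lemma probability_setC_le {d : measure_display} {T : measurableType d}
  {R : realType} (mu : probability T R) (A : set T) (c : \bar R) :
  measurable A -> c \is a fin_num -> (1 - c <= mu A)%E -> (mu (~` A) <= c)%E.
Proof.
move=> mA fc; rewrite probability_setC // !leeBlDl ?fin_num_measure //.
by rewrite addeC.
Qed.

Lemma half_le_half_setdist {R : realType} {E : Type} (dist : E -> E -> R)
  (A B : set E) (r : R) :
  (r%:E <= setdist dist A B)%E -> ((r / 2)%:E <= (2^-1)%:E * setdist dist A B)%E.
Proof.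
by rewrite mulrC EFinM lee_pmul2l // lte_fin invr_gt0.
Qed.

Theorem proposition4p3 (d : measure_display) (E : measurableType d)
  (R : realType) (dist : E -> E -> R) (mu : probability E R)
  (k : nat) (alpha : R -> R) :
  is_metric dist ->
  (* the sigma-algebra of E is the Borel sigma-algebra of (E, dist) *)
  @measurable d E = <<s [set U | dopen dist U] >> ->
  (0 < k)%N ->
  (forall r, 0 <= r -> 0 <= alpha r) ->
  multiset_concentration dist mu k alpha ->
  forall f : E -> R, lipschitz1 dist f ->
  forall A : 'I_k -> set E,
    (forall i, measurable (A i)) ->
    inDelta (fun i => mu (A i)) ->
  forall g : E -> R, lipschitz1 dist g ->
    (forall x, (\bigcup_(i in [set: 'I_k]) A i) x -> g x = f x) ->
  forall r : R, 0 < r ->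
    (forall i j, i != j -> (r%:E <= setdist dist (A i) (A j))%E) ->
    (mu [set x | (r <= `|f x - g x|)%R]
       <= (1 - mu (\bigcup_(i in [set: 'I_k]) A i)) * (alpha (r / 2))%:E)%E.
Proof.
move=> [_ dsym dtri] borel _ _ conc f Lf A mA inD g Lg gf r r0 sep.
set U := \bigcup_(i in [set: 'I_k]) A i.
have mU : measurable U by apply: fin_bigcup_measurable => // i _; exact: mA.
have dopenM V : dopen dist V -> measurable V.
  by rewrite borel; apply: sub_sigma_algebra.
have Lfg := lipschitz1_sub Lf Lg.
have fg0 y : U y -> (f \- g) y = 0 by move=> Uy; rewrite /= gf // subrr.
have -> : [set x | r <= `|f x - g x|] = ~` [set x | `|(f \- g) x| < r].
  by apply/seteqP; split=> x /=; [rewrite ltNge => -> | rewrite leNgt => /negP].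
have Ur_open : dopen dist (enlarge dist U (r / 2)) by exact: dopen_enlarge.
have fg_open : dopen dist [set x | `|(f \- g) x| < r] by exact: dopen_norm_lt Lfg.
apply: le_trans (_ : mu (~` enlarge dist U (r / 2)) <= _)%E.
  apply: le_measure; rewrite ?inE; try exact/measurableC/dopenM.
  apply: subsetC => x /(norm_lt_on_enlarge (ltr0Sn R 1) Lfg fg0).
  by rewrite mulrCA divff ?mulr1.
apply: probability_setC_le; first exact: dopenM.
  by rewrite fin_numM // fin_numB fin_num_measure.
apply: conc => //; first by rewrite divr_gt0.
by move=> i j ij; apply/half_le_half_setdist/sep.
Qed.
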